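(* Let $G$ be a finite abelian group, $k\ge d+1\ge2$ integers, and let $V_0=\{(0,1),\dots,(0,k)\}$ and $I=\{\iota_1,\dots,\iota_{d+1}\}$ be disjoint index sets. For $\omega\in\{0,1\}^{d+1}\setminus\{0\}$ let $\phi_\omega:G^{V_0\cup I}\to G$ be the linear form $$\phi_\omega(\mathbf{x})=\sum_{i=1}^{d+1}\big((1-\omega_i)x_{(0,i)}+\omega_i x_{\iota_i}\big)+\sum_{i=d+2}^{k}x_{(0,i)},$$ and let $\Phi_1=\{\phi_\omega:\omega\in\{0,1\}^{d+1}\setminus\{0\}\}$. Then for every $f:G\to[-1,1]$, $$\|f\|_{\square(\Phi_1)}\ge\|f\|_{U^{d+1}}^{2^{d+1}}.$$
   Context: For a linear system $\Phi$ of linear forms $G^{W}\to G$ with $0/1$ coefficients (each determined by its support $\mathrm{supp}(\phi)\subseteq W$ via $\phi(\mathbf{x})=\sum_{v\in\mathrm{supp}(\phi)}x_v$), let $V(\Phi)=V_0\cup\bigcup_{\phi\in\Phi}\mathrm{supp}(\phi)$ and define, for $f:G\to\mathbb{R}$, $$\|f\|_{\square(\Phi)}=\max_{u_\phi:G\to[-1,1]\ (\phi\in\Phi)}\mathbb{E}_{\mathbf{x}\in G^{V(\Phi)}}\Big[f\Big(\sum_{v\in V_0}x_v\Big)\prod_{\phi\in\Phi}u_\phi(\phi(\mathbf{x}))\Big].$$ $\|f\|_{U^{m}}=\big(\mathbb{E}_{x,h_1,\dots,h_m\in G}\prod_{\omega\in\{0,1\}^m}f(x+\sum_i\omega_ih_i)\big)^{1/2^m}$.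 *)

From HB Require Import structures.
From mathcomp Require Import all_boot all_order all_algebra.
From mathcomp Require Import all_classical all_reals all_analysis.
Set Implicit Arguments. Unset Strict Implicit. Unset Printing Implicit Defensive.
Import Order.TTheory GRing.Theory Num.Theory.
Local Open Scope ring_scope.
Local Open Scope classical_set_scope.

Definition Efin (R : realType) (T : finType) (F : T -> R) : R :=
  (#|T|%:R)^-1 * \sum_(t : T) F t.

(* Linear system of 0/1 forms: variables W, distinguished set V0, forms
   indexed by P, each determined by its support supp p : {set W}.
   ||f||_{box(Phi)} = max over u_phi : G -> [-1,1] of
   E_x f(sum_{v in V0} x_v) prod_phi u_phi(phi(x)).
   The max (attained: compact domain, continuous expression) is written as
   the supremum of the set of attained values. *)
Definition box_value (R : realType) (G : finZmodType) (W P : finType)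
  (V0 : {set W}) (supp : P -> {set W}) (f : G -> R) (u : P -> G -> R) : R :=
  Efin (fun x : {ffun W -> G} =>
    f (\sum_(v in V0) x v) * \prod_(p : P) u p (\sum_(v in supp p) x v)).

Definition box_norm (R : realType) (G : finZmodType) (W P : finType)
  (V0 : {set W}) (supp : P -> {set W}) (f : G -> R) : R :=
  sup [set r : R | exists u : P -> G -> R,
        (forall p g, -1 <= u p g <= 1) /\ r = box_value V0 supp f u].

Definition gowers_norm (R : realType) (G : finZmodType) (m : nat) (f : G -> R) : R :=
  powR (Efin (fun xh : G * {ffun 'I_m -> G} =>
     \prod_(w : {ffun 'I_m -> bool})
        f (xh.1 + \sum_(i < m) (if w i then xh.2 i else 0))))
       ((2 ^ m)%:R)^-1.

(* The system Phi_1.  Variables: inl i  <->  (0, i+1)  (i < k),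
                                 inr j  <->  iota_(j+1) (j < d+1). *)
Definition Phi1_V0 (k d : nat) : {set 'I_k + 'I_d.+1} :=
  [set v : 'I_k + 'I_d.+1 | if v is inl _ then true else false].

Definition Phi1_index (d : nat) : finType :=
  {w : {ffun 'I_d.+1 -> bool} | w != [ffun => false]}.

Definition Phi1_supp (k d : nat) (w : Phi1_index d) : {set 'I_k + 'I_d.+1} :=
  [set v : 'I_k + 'I_d.+1 | match v with
           | inl i => if (nat_of_ord i < d.+1)%N then ~~ val w (inord (nat_of_ord i)) else true
           | inr j => val w j
           end].

From HB Require Import structures.
From mathcomp Require Import all_boot all_order all_algebra.
From mathcomp Require Import all_classical all_reals all_analysis.
Import Order.TTheory GRing.Theory Num.Theory.
Local Open Scope ring_scope.

(* Theorem 7: the lower bound is witnessed by the choice u_phi := f for every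
   form of Phi_1.
   In the coordinates s(x) = sum_{v in V0} x_v and h_i(x) = x_{iota_i} - x_{(0,i)}
   every form of Phi_1 reads phi_omega(x) = s(x) + sum_{i : omega_i} h_i(x), and
   the missing vertex omega = 0 of the cube is the distinguished form s(x).  So
   the box value of f with all u_phi := f is the average over x of
   prod_{omega in {0,1}^{d+1}} f(s(x) + omega.h(x)).  The coordinate map
   x |-> (s(x), h(x)) is a surjective homomorphism G^{V0 u I} -> G x G^{d+1},
   and averages are invariant under such push-forwards, so this box value is
   the Gowers average E_{x,h} prod_omega f(x + omega.h).  That average is a sum
   of squares, hence equals ||f||_{U^{d+1}}^{2^{d+1}}; and, being an admissible
   box value (all box values are at most 1), it is below the box norm. *)

(* Finite products and function spaces of finite abelian groups are finite
   abelian groups; the averaging lemmas below are stated for such groups. *)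
HB.saturate prod.
HB.saturate finfun_of.

Section Averages.
Context {R : realType}.

(* Averages over a finite abelian group are preserved by pushing forward along
   a surjective homomorphism T: the sum of K over the image of T is invariant
   under translations of Y, and averaging over all translations double counts. *)
Lemma Efin_pushforward {X Y : finZmodType} (T : X -> Y) (K : Y -> R) :
  {morph T : a b / a + b} -> (forall y, exists x, T x = y) ->
  Efin (fun x => K (T x)) = Efin K.
Proof.
move=> T_add T_surj.
have shift_inv y : \sum_x K (T x) = \sum_x K (T x + y).
  have [z <-] := T_surj y.
  by rewrite (reindex_inj (addIr z)); apply: eq_bigr => x _; rewrite T_add.
have double_count : #|Y|%:R * \sum_x K (T x) = #|X|%:R * \sum_y K y :> R.
  have sum_const (Z : finType) (c : R) : \sum_(z : Z) c = #|Z|%:R * c.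
    by rewrite sumr_const mulr_natl.
  rewrite -sum_const (eq_bigr _ (fun y _ => shift_inv y)) exchange_big /=.
  rewrite -sum_const; apply: eq_bigr => x _.
  by rewrite [RHS](reindex_inj (addrI (T x))).
have card_neq0 (Z : finZmodType) : #|Z|%:R != 0 :> R.
  by rewrite pnatr_eq0 -lt0n; apply/card_gt0P; exists 0.
rewrite /Efin -(mulKf (card_neq0 Y) (\sum_x K (T x))) double_count.
by rewrite mulrCA mulKf.
Qed.

End Averages.

Section GowersAverage.
Context {R : realType} {G : finZmodType}.

Definition cube_prod {m : nat} (f : G -> R) (x : G) (h : {ffun 'I_m -> G}) : R :=
  \prod_(w : {ffun 'I_m -> bool}) f (x + \sum_(i < m) (if w i then h i else 0)).

Definition face_prod {n : nat} (f : G -> R) (x : G) (h : {ffun 'I_n.+1 -> G}) : R :=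
  \prod_(w : {ffun 'I_n.+1 -> bool} | ~~ w ord0)
     f (x + \sum_(i < n.+1) (if w i then h i else 0)).

Definition gowers_avg (m : nat) (f : G -> R) : R :=
  Efin (fun xh : G * {ffun 'I_m -> G} => cube_prod f xh.1 xh.2).

Definition set_first {n : nat} (h : {ffun 'I_n.+1 -> G}) (c : G) : {ffun 'I_n.+1 -> G} :=
  [ffun i => if i == ord0 then c else h i].

Lemma face_prod_set_first n f x (h : {ffun 'I_n.+1 -> G}) c :
  face_prod f x (set_first h c) = face_prod f x h.
Proof.
apply: eq_bigr => w w0; congr (f (_ + _)).
rewrite (bigD1 ord0) //= [RHS](bigD1 ord0) //= (negbTE w0) !add0r.
by apply: eq_bigr => i i0; rewrite ffunE (negbTE i0).
Qed.

Definition flip_first {n : nat} (w : {ffun 'I_n.+1 -> bool}) : {ffun 'I_n.+1 -> bool} :=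
  [ffun i => if i == ord0 then ~~ w i else w i].

Lemma flip_firstK n : involutive (@flip_first n).
Proof. by move=> w; apply/ffunP => i; rewrite !ffunE; case: eqP; rewrite ?negbK. Qed.

Lemma cube_prod_split n f x (h : {ffun 'I_n.+1 -> G}) :
  cube_prod f x h = face_prod f x h * face_prod f (x + h ord0) h.
Proof.
rewrite /cube_prod (bigID (fun w : {ffun 'I_n.+1 -> bool} => w ord0)) /= mulrC.
congr (_ * _); rewrite (reindex_inj (can_inj (@flip_firstK n))) /=.
apply: eq_big => [w|w]; rewrite ffunE eqxx // => w0.
rewrite (bigD1 ord0) //= [in RHS](bigD1 ord0) //= ffunE eqxx w0 (negbTE w0).
rewrite add0r addrA; congr (f (_ + _)); apply: eq_bigr => i i0.
by rewrite ffunE (negbTE i0).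
Qed.

(* The Gowers average is a sum of squares, hence nonnegative: substituting
   h_0 = y' - y turns it into E_h (E_y face_prod f y h)^2 (up to a factor). *)
Lemma gowers_avg_ge0 n f : 0 <= gowers_avg n.+1 f.
Proof.
pose T (t : (G * G) * {ffun 'I_n.+1 -> G}) : G * {ffun 'I_n.+1 -> G} :=
  (t.1.1, set_first t.2 (t.1.2 - t.1.1)).
have T_add : {morph T : a b / a + b}.
  move=> a b; congr (_, _); apply/ffunP => i; rewrite !ffunE.
  by case: eqP => // _; rewrite opprD addrACA.
have T_surj p : exists t, T t = p.
  exists ((p.1, p.1 + p.2 ord0), p.2); case: p => y h; rewrite /T /= (addrC y) addrK.
  by congr (_, _); apply/ffunP => i; rewrite ffunE; case: eqP => [->|].
rewrite /gowers_avg -(Efin_pushforward T (fun p => cube_prod f p.1 p.2) T_add T_surj).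
rewrite /Efin mulr_ge0 ?invr_ge0 ?ler0n //=.
rewrite (eq_bigr (fun t => face_prod f t.1.1 t.2 * face_prod f t.1.2 t.2)); last first.
  move=> [[y y'] h] _ /=.
  by rewrite cube_prod_split !face_prod_set_first ffunE eqxx addrC subrK.
rewrite -(pair_bigA _ (fun a h => face_prod f a.1 h * face_prod f a.2 h)) exchange_big /=.
apply: sumr_ge0 => h _.
rewrite -(pair_bigA _ (fun y y' => face_prod f y h * face_prod f y' h)) /=.
under eq_bigr do rewrite -big_distrr.
by rewrite -big_distrl; exact: sqr_ge0.
Qed.

Lemma gowers_norm_pow n f : gowers_norm n.+1 f ^+ (2 ^ n.+1) = gowers_avg n.+1 f.
Proof.
have avg_ge0 := gowers_avg_ge0 n f.
rewrite /gowers_norm -powR_mulrn ?powR_ge0 // -powRrM mulVf ?pnatr_eq0 ?expn_eq0 //.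
exact: powRr1.
Qed.

End GowersAverage.

Section Phi1Coordinates.
Context {G : finZmodType} {k d : nat}.
Hypothesis hk : (d.+1 <= k)%N.

Definition Phi1_coords (x : {ffun 'I_k + 'I_d.+1 -> G}) : G * {ffun 'I_d.+1 -> G} :=
  (\sum_(v in Phi1_V0 k d) x v, [ffun j => x (inr j) - x (inl (widen_ord hk j))]).

Lemma Phi1_V0_sum (x : {ffun 'I_k + 'I_d.+1 -> G}) :
  \sum_(v in Phi1_V0 k d) x v = \sum_(i < k) x (inl i).
Proof.
rewrite big_mkcond big_sumType /= [X in _ + X]big1 ?addr0 => [|j _].
  by apply: eq_bigr => i _; rewrite inE.
by rewrite inE.
Qed.

Lemma Phi1_coords_additive : {morph Phi1_coords : a b / a + b}.
Proof.
move=> a b; congr (_, _) => /=; rewrite ?Phi1_V0_sum.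
  by rewrite -big_split; apply: eq_bigr => i _; rewrite ffunE.
by apply/ffunP => j; rewrite !ffunE opprD addrACA.
Qed.

(* ... and it is onto: put s on the coordinate (0,1) and h_i + x_{(0,i)} on iota_i. *)
Lemma Phi1_coords_surjective p : exists x, Phi1_coords x = p.
Proof.
case: p => s h; pose i0 := widen_ord hk ord0.
pose x : {ffun 'I_k + 'I_d.+1 -> G} := [ffun v => match v with
  | inl i => if i == i0 then s else 0
  | inr j => h j + (if widen_ord hk j == i0 then s else 0) end].
exists x; rewrite /Phi1_coords Phi1_V0_sum; congr (_, _).
  rewrite (bigD1 i0) //= big1 => [|i /negbTE i_ne]; by rewrite ffunE ?eqxx ?addr0 ?i_ne.
by apply/ffunP => j; rewrite !ffunE addrK.
Qed.

Lemma Phi1_supp_sum (w : Phi1_index d) (x : {ffun 'I_k + 'I_d.+1 -> G}) :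
  \sum_(v in Phi1_supp k w) x v =
  (Phi1_coords x).1 + \sum_(i < d.+1) (if val w i then (Phi1_coords x).2 i else 0).
Proof.
pose lower i := (val w (inord i) && (i < d.+1))%N.
have lower_sum : \sum_(i < k | lower i) x (inl i) = \sum_(j | val w j) x (inl (widen_ord hk j)).
  rewrite big_ord_narrow_cond; apply: eq_bigl => j /=.
  by congr (val w _); apply: val_inj; rewrite /= inordK.
have supp_inl i : (inl i \in Phi1_supp k w) = ~~ lower i.
  by rewrite inE /lower; case: ltnP; rewrite ?andbT ?andbF.
have supp_inr j : (inr j \in Phi1_supp k w) = val w j by rewrite inE.
rewrite big_sumType /= (eq_bigl _ _ supp_inl) (eq_bigl _ _ supp_inr).
rewrite Phi1_V0_sum [in RHS](bigID (fun i : 'I_k => lower i)) /= lower_sum.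
rewrite [X in _ = X + _]addrC -addrA; congr (_ + _).
under [in RHS]eq_bigr do rewrite ffunE.
by rewrite -big_mkcond big_split /= sumrN addrCA subrr addr0.
Qed.

End Phi1Coordinates.

Lemma box_value_Phi1 {R : realType} {G : finZmodType} {k d : nat}
  (hk : (d.+1 <= k)%N) (f : G -> R) :
  box_value (Phi1_V0 k d) (@Phi1_supp k d) f (fun _ => f) = gowers_avg d.+1 f.
Proof.
rewrite /gowers_avg -(Efin_pushforward _ _ (Phi1_coords_additive hk)
                                          (Phi1_coords_surjective hk)).
rewrite /box_value /Efin; congr (_ * _); apply: eq_bigr => x _ /=.
rewrite /cube_prod (bigD1 [ffun => false]) //=.
rewrite [X in f (_ + X)]big1 ?addr0 => [|i _]; last by rewrite ffunE.
congr (_ * _).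
under eq_bigr do rewrite Phi1_supp_sum.
by rewrite (big_sub [pred w : {ffun 'I_d.+1 -> bool} | w != [ffun => false]]).
Qed.

Section BoxNormBounds.
Context {R : realType} {G : finZmodType} {W P : finType}.
Variables (V0 : {set W}) (supp : P -> {set W}) (f : G -> R).
Hypothesis f_bounded : forall g, -1 <= f g <= 1.

Lemma box_value_le1 (u : P -> G -> R) :
  (forall p g, -1 <= u p g <= 1) -> box_value V0 supp f u <= 1.
Proof.
move=> u_bounded; rewrite /box_value /Efin.
have card_neq0 : #|{ffun W -> G}|%:R != 0 :> R.
  by rewrite pnatr_eq0 -lt0n; apply/card_gt0P; exists 0.
rewrite -[X in _ <= X](mulVf card_neq0) ler_wpM2l ?invr_ge0 ?ler0n //.
rewrite -sumr_const; apply: ler_sum => x _.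
apply: le_trans (ler_norm _) _; rewrite normrM normr_prod mulr_ile1 //.
- exact: prodr_ge0.
- by rewrite ler_norml f_bounded.
- by apply: prodr_ile1 => p _; rewrite normr_ge0 ler_norml u_bounded.
Qed.

Lemma box_value_le_box_norm (u : P -> G -> R) :
  (forall p g, -1 <= u p g <= 1) -> box_value V0 supp f u <= box_norm V0 supp f.
Proof.
move=> u_bounded; apply: ub_le_sup; last by exists u.
by exists 1 => r [v [v_bounded ->]]; exact: box_value_le1.
Qed.

End BoxNormBounds.

Theorem mainTheorem7 (R : realType) (G : finZmodType) (k d : nat)
  (hd : (1 <= d)%N) (hk : (d.+1 <= k)%N) (f : G -> R)
  (hf : forall g, -1 <= f g <= 1) :
  box_norm (Phi1_V0 k d) (@Phi1_supp k d) f >= gowers_norm d.+1 f ^+ (2 ^ d.+1).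
Proof.
rewrite gowers_norm_pow -(box_value_Phi1 hk f).
exact: box_value_le_box_norm.
Qed.
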